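(* Let $q\ge2$ be an integer which is not a prime power. Then the interpolated fusion ring $\mathcal{R}_q$ is not (isomorphic as a fusion ring to) the Grothendieck ring of $\mathrm{Rep}(G)$ for any finite group $G$.
   Context: $\zeta_n=\exp(2\pi i/n)$. For integer $q\ge2$, $\mathcal{R}_q$ is the commutative fusion ring whose basis is the set of rows of the formal table $T_q$ below and whose structure constants are $N_{x,y}^z=\sum_s\lambda_{x,s}\lambda_{y,s}\overline{\lambda_{z,s}}/\mathfrak{c}_s$, $\mathfrak{c}_s=\sum_x|\lambda_{x,s}|^2$ (these form a commutative fusion ring with eigentable $T_q$, i.e. $T_q$ is the table of joint eigenvalues of the fusion matrices). Table $T_q$ (rows $x_{d,c}$; entries per row listed in the column order given): Case $q$ even. Columns: $C_0$; $C_1$; $A_k$ ($1\le k\le\frac{q-2}{2}$); $B_k$ ($1\le k\le\frac q2$). Rows: $x_{1,1}$: $1,1,1,1$. $x_{q-1,c}$ ($1\le c\le \frac q2$): $q-1,\,-1,\,0,\,-\zeta_{q+1}^{kc}-\zeta_{q+1}^{-kc}$. $x_{q,1}$: $q,0,1,-1$. $x_{q+1,c}$ ($1\le c\le\frac{q-2}{2}$): $q+1,\,1,\,\zeta_{q-1}^{kc}+\zeta_{q-1}^{-kc},\,0$. Case $q\equiv-1\pmod 4$. Columns: $C_0$; $D_k$ ($k\in\{1,2\}$); $A_k$ ($1\le k\le\frac{q-3}{4}$); $B_k$ ($1\le k\le\frac{q-3}{4}$); $E$ (with $k=\frac{q+1}{4}$). Rows: $x_{1,1}$: all $1$. $x_{\frac{q-1}{2},c}$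 ($c\in\{1,2\}$): $\frac{q-1}2,\ \frac{-1+i(-1)^{k+c}\sqrt q}{2},\ 0,\ (-1)^{k+1},\ (-1)^{k+1}$. $x_{q-1,c}$ ($1\le c\le\frac{q-3}4$): $q-1,\,-1,\,0,\,-\zeta_{q+1}^{2kc}-\zeta_{q+1}^{-2kc},\,-2(-1)^c$. $x_{q,1}$: $q,0,1,-1,-1$. $x_{q+1,c}$ ($1\le c\le\frac{q-3}4$): $q+1,\,1,\,\zeta_{q-1}^{2kc}+\zeta_{q-1}^{-2kc},\,0,\,0$. Case $q\equiv1\pmod4$. Columns: $C_0$; $D_k$ ($k\in\{1,2\}$); $A_k$ ($1\le k\le\frac{q-5}4$); $E$ (with $k=\frac{q-1}4$); $B_k$ ($1\le k\le\frac{q-1}4$). Rows: $x_{1,1}$: all $1$. $x_{\frac{q+1}2,c}$ ($c\in\{1,2\}$): $\frac{q+1}2,\ \frac{1+(-1)^{k+c}\sqrt q}{2},\ (-1)^k,\ (-1)^k,\ 0$. $x_{q-1,c}$ ($1\le c\le\frac{q-1}4$): $q-1,\,-1,\,0,\,0,\,-\zeta_{q+1}^{2kc}-\zeta_{q+1}^{-2kc}$. $x_{q,1}$: $q,0,1,1,-1$. $x_{q+1,c}$ ($1\le c\le\frac{q-5}4$): $q+1,\,1,\,\zeta_{q-1}^{2kc}+\zeta_{q-1}^{-2kc},\,2(-1)^c,\,0$. *)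

From HB Require Import structures.
From mathcomp Require Import all_boot all_order all_algebra all_fingroup all_solvable all_field all_character.
Set Implicit Arguments. Unset Strict Implicit. Unset Printing Implicit Defensive.
Import Order.TTheory GRing.Theory Num.Theory.
Local Open Scope ring_scope.

(* zeta n = exp(2 pi i / n).  In algC, n.-root (-1) is the n-th root of -1
   with nonnegative imaginary part and maximal real part, i.e. exp(i pi / n);
   its square is exp(2 pi i / n). *)
Definition zeta (n : nat) : algC := (n.-root (-1)) ^+ 2.

Definition zsum (n m : nat) : algC := zeta n ^+ m + zeta n ^- m.

(* Row labels of T_q (basis of R_q):
   Triv = x_{1,1}; Xm c = x_{q-1,c}; Xq = x_{q,1}; Xp c = x_{q+1,c};
   Xh c = x_{(q-1)/2,c} (q = -1 mod 4) or x_{(q+1)/2,c} (q = 1 mod 4). *)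
Inductive rowl := Triv | Xm of nat | Xq | Xp of nat | Xh of nat.

Inductive coll := C0 | C1 | Acol of nat | Bcol of nat | Dcol of nat | Ecol.

Lemma rowl_comparable : comparable rowl. Proof. rewrite /comparable /decidable; decide equality; apply: (@eq_comparable nat). Qed.
HB.instance Definition _ := comparableMixin rowl_comparable.
Lemma coll_comparable : comparable coll. Proof. rewrite /comparable /decidable; decide equality; apply: (@eq_comparable nat). Qed.
HB.instance Definition _ := comparableMixin coll_comparable.

Definition range1 (n : nat) : seq nat := iota 1 n.

Definition rows (q : nat) : seq rowl :=
  if ~~ odd q then
    [:: Triv] ++ map Xm (range1 (q %/ 2)%N) ++ [:: Xq] ++ map Xp (range1 ((q - 2) %/ 2)%N)
  else if (q %% 4 == 3)%N then
    [:: Triv] ++ map Xh (range1 2) ++ map Xm (range1 ((q - 3) %/ 4)%N) ++ [:: Xq]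
      ++ map Xp (range1 ((q - 3) %/ 4)%N)
  else
    [:: Triv] ++ map Xh (range1 2) ++ map Xm (range1 ((q - 1) %/ 4)%N) ++ [:: Xq]
      ++ map Xp (range1 ((q - 5) %/ 4)%N).

Definition cols (q : nat) : seq coll :=
  if ~~ odd q then
    [:: C0; C1] ++ map Acol (range1 ((q - 2) %/ 2)%N) ++ map Bcol (range1 (q %/ 2)%N)
  else if (q %% 4 == 3)%N then
    [:: C0] ++ map Dcol (range1 2) ++ map Acol (range1 ((q - 3) %/ 4)%N)
      ++ map Bcol (range1 ((q - 3) %/ 4)%N) ++ [:: Ecol]
  else
    [:: C0] ++ map Dcol (range1 2) ++ map Acol (range1 ((q - 5) %/ 4)%N) ++ [:: Ecol]
      ++ map Bcol (range1 ((q - 1) %/ 4)%N).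

Definition sgn (n : nat) : algC := (-1) ^+ n.

Definition lam (q : nat) (x : rowl) (s : coll) : algC :=
  if ~~ odd q then
    match x, s with
    | Triv, _ => 1
    | Xm c, C0 => (q - 1)%N%:R
    | Xm c, C1 => -1
    | Xm c, Acol k => 0
    | Xm c, Bcol k => - zsum q.+1 (k * c)%N
    | Xq, C0 => q%:R
    | Xq, C1 => 0
    | Xq, Acol k => 1
    | Xq, Bcol k => -1
    | Xp c, C0 => q.+1%:R
    | Xp c, C1 => 1
    | Xp c, Acol k => zsum (q - 1)%N (k * c)%N
    | Xp c, Bcol k => 0
    | _, _ => 0
    end
  else if (q %% 4 == 3)%N then
    match x, s with
    | Triv, _ => 1
    | Xh c, C0 => ((q - 1) %/ 2)%N%:R
    | Xh c, Dcol k => (-1 + 'i * sgn (k + c)%N * sqrtC q%:R) / 2%:R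
    | Xh c, Acol k => 0
    | Xh c, Bcol k => sgn k.+1
    | Xh c, Ecol => sgn (((q + 1) %/ 4).+1)%N
    | Xm c, C0 => (q - 1)%N%:R
    | Xm c, Dcol k => -1
    | Xm c, Acol k => 0
    | Xm c, Bcol k => - zsum q.+1 (2 * k * c)%N
    | Xm c, Ecol => - (2%:R * sgn c)
    | Xq, C0 => q%:R
    | Xq, Dcol k => 0
    | Xq, Acol k => 1
    | Xq, Bcol k => -1
    | Xq, Ecol => -1
    | Xp c, C0 => q.+1%:R
    | Xp c, Dcol k => 1
    | Xp c, Acol k => zsum (q - 1)%N (2 * k * c)%N
    | Xp c, Bcol k => 0
    | Xp c, Ecol => 0
    | _, _ => 0
    end
  else
    match x, s with
    | Triv, _ => 1
    | Xh c, C0 => ((q + 1) %/ 2)%N%:R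
    | Xh c, Dcol k => (1 + sgn (k + c)%N * sqrtC q%:R) / 2%:R
    | Xh c, Acol k => sgn k
    | Xh c, Ecol => sgn ((q - 1) %/ 4)%N
    | Xh c, Bcol k => 0
    | Xm c, C0 => (q - 1)%N%:R
    | Xm c, Dcol k => -1
    | Xm c, Acol k => 0
    | Xm c, Ecol => 0
    | Xm c, Bcol k => - zsum q.+1 (2 * k * c)%N
    | Xq, C0 => q%:R
    | Xq, Dcol k => 0
    | Xq, Acol k => 1
    | Xq, Ecol => 1
    | Xq, Bcol k => -1
    | Xp c, C0 => q.+1%:R
    | Xp c, Dcol k => 1
    | Xp c, Acol k => zsum (q - 1)%N (2 * k * c)%N
    | Xp c, Ecol => 2%:R * sgn c
    | Xp c, Bcol k => 0
    | _, _ => 0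
    end.

Definition cnorm (q : nat) (s : coll) : algC :=
  \sum_(x <- rows q) `|lam q x s| ^+ 2.

Definition Nfus (q : nat) (x y z : rowl) : algC :=
  \sum_(s <- cols q) lam q x s * lam q y s * (lam q z s)^* / cnorm q s.

Definition fusion_iso_Rep (q : nat) (gT : finGroupType) (G : {group gT}) : Prop :=
  exists f : rowl -> Iirr G,
    [/\ {in rows q &, injective f},
        (forall i : Iirr G, exists2 x, x \in rows q & f x = i)
      & {in rows q & &, forall x y z,
           Nfus q x y z = '['chi_(f x) * 'chi_(f y), 'chi_(f z)]_G}].

(* An isomorphism of R_q with the representation ring of G turns the eigentable
   T_q into the character table of G: every column of the character table is a
   column of T_q, the degrees form the column C_0, and centraliser orders are
   column norms.  The row x_{q,1} then behaves like a Steinberg character: it has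
   degree q, where |G| = q K with gcd(q, K) = 1, and takes the values +1 or -1
   except on at most two columns, whose centralisers have order q.  If a prime
   dividing q divides the order of a, the value at a cannot be +1 or -1, since
   q would divide the class size of a and so the centraliser order of a would
   divide K; hence a lies in one of the two exceptional columns.  Given distinct
   primes p, r dividing q, an element g of order p has a centraliser of order q,
   which contains an element h of order r.  Then g, h and gh have the distinct
   orders p, r and pr, yet lie in two columns, so two of them are conjugate. *)

From HB Require Import structures.
From mathcomp Require Import all_boot all_order all_algebra all_fingroup all_solvable all_field all_character.
From mathcomp Require Import ring zify.

Set Implicit Arguments. Unset Strict Implicit. Unset Printing Implicit Defensive.
Import Order.TTheory GRing.Theory Num.Theory.
Local Open Scope ring_scope.

Lemma irr1_ge1 (gT : finGroupType) (G : {group gT}) (i : Iirr G) : 1 <= 'chi_i 1%g.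
Proof.
by have [d dE] := natrP (Cnat_irr1 i); move: (irr1_gt0 i); rewrite dE ltr0n ler1n.
Qed.

Section EigentableRep.

Variables (I J : eqType) (rI : seq I) (cJ : seq J) (lam : I -> J -> algC).
Variables (one : I) (c0 : J).

Definition col_norm (s : J) : algC := \sum_(x <- rI) `|lam x s| ^+ 2.

Definition fusion_coef (x y z : I) : algC :=
  \sum_(s <- cJ) lam x s * lam y s * (lam z s)^* / col_norm s.

Variables (gT : finGroupType) (G : {group gT}) (f : I -> Iirr G).
Hypotheses (rI_uniq : uniq rI) (size_rI_cJ : size rI = size cJ).
Hypotheses (f_inj : {in rI &, injective f})
  (f_surj : forall i : Iirr G, exists2 x, x \in rI & f x = i)
  (f_fusion : {in rI & &, forall x y z,
     fusion_coef x y z = '['chi_(f x) * 'chi_(f y), 'chi_(f z)]_G}).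

Lemma sum_Iirr_rows (F : Iirr G -> algC) : \sum_i F i = \sum_(x <- rI) F (f x).
Proof.
rewrite -(big_map f xpredT); apply/perm_big/uniq_perm; rewrite ?index_enum_uniq //.
  by rewrite map_inj_in_uniq.
by move=> i; rewrite mem_index_enum; have [x xR <-] := f_surj i; rewrite map_f.
Qed.

Definition irr_coord (g : gT) (s : J) : algC :=
  (\sum_(z <- rI) (lam z s)^* * 'chi_(f z) g) / col_norm s.

Lemma irrM_expansion g x y : x \in rI -> y \in rI ->
  'chi_(f x) g * 'chi_(f y) g = \sum_(s <- cJ) lam x s * lam y s * irr_coord g s.
Proof.
move=> xR yR.
have := congr1 (fun phi : 'CF(G) => phi g) (cfun_sum_cfdot ('chi_(f x) * 'chi_(f y))).
rewrite cfunE sum_cfunE => ->; rewrite sum_Iirr_rows big_seq.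
under eq_bigr => z zR do rewrite cfunE -f_fusion // /fusion_coef mulr_suml.
rewrite -big_seq exchange_big /=; apply: eq_bigr => s _.
rewrite /irr_coord mulr_suml mulr_sumr; apply: eq_bigr => z _; ring.
Qed.

Section TrivialCharacterRow.

Variable x1 : I.
Hypotheses (x1_in : x1 \in rI) (f_x1 : f x1 = 0).

Let w g s := lam x1 s * irr_coord g s.

Lemma irr_expansion g y : g \in G -> y \in rI ->
  'chi_(f y) g = \sum_(s <- cJ) lam y s * w g s.
Proof.
move=> Gg yR; have := irrM_expansion g x1_in yR.
rewrite f_x1 irr0 cfun1E Gg mul1r => ->; apply: eq_bigr => s _; rewrite /w; ring.
Qed.

Let n := size rI.
Let row_ (i : 'I_n) := nth one rI i.
Let col_ (j : 'I_n) := nth c0 cJ j.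

Definition eigen_mx : 'M[algC]_n := \matrix_(i, j) lam (row_ i) (col_ j).

Lemma sum_cols_ord (F : J -> algC) : \sum_(s <- cJ) F s = \sum_(j < n) F (col_ j).
Proof. by rewrite (big_nth c0) -size_rI_cJ big_mkord. Qed.

Lemma eigen_mx_unit : eigen_mx \in unitmx.
Proof.
have rowR i : row_ i \in rI by rewrite mem_nth.
(* B is a right inverse by the orthonormality of the irreducible characters. *)
pose B : 'M[algC]_n := \matrix_(j, i)
  (#|G|%:R^-1 * \sum_(g in G) w g (col_ j) * ('chi_(f (row_ i)) g)^*).
suff /mulmx1_unit[] : eigen_mx *m B = 1%:M by [].
apply/matrixP => i i'; rewrite !mxE.
under eq_bigr => j _ do rewrite !mxE mulrCA mulr_sumr.
rewrite -mulr_sumr exchange_big /=.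
transitivity '['chi_(f (row_ i)), 'chi_(f (row_ i'))]_G.
  rewrite cfdotE; congr (_ * _); apply: eq_bigr => g Gg.
  rewrite (irr_expansion Gg (rowR i)) sum_cols_ord mulr_suml.
  by apply: eq_bigr => j _; rewrite mulrA.
by rewrite cfdot_irr (inj_in_eq f_inj) ?rowR // nth_uniq.
Qed.

Lemma eigen_coords_eq0 (z : J -> algC) :
    (forall y, y \in rI -> \sum_(s <- cJ) lam y s * z s = 0) ->
  {in cJ, forall s, z s = 0}.
Proof.
move=> Tz s sS; pose v : 'cV[algC]_n := \col_j z (col_ j).
have Tv : eigen_mx *m v = 0.
  apply/matrixP => i k; rewrite !mxE -[RHS](Tz (row_ i)) ?mem_nth // sum_cols_ord.
  by apply: eq_bigr => j _; rewrite !mxE.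
have v0 : v = 0 by rewrite -[v](mulKmx eigen_mx_unit) Tv mulmx0.
have si : (index s cJ < n)%N by rewrite /n size_rI_cJ index_mem.
by move/matrixP/(_ (Ordinal si) 0): v0; rewrite !mxE /col_ /= nth_index.
Qed.

Lemma lam_irr_coord g x s : g \in G -> x \in rI -> s \in cJ ->
  lam x s * irr_coord g s = 'chi_(f x) g * w g s.
Proof.
move=> Gg xR sS; apply/eqP; rewrite -subr_eq0; apply/eqP.
apply: (eigen_coords_eq0 (z := fun s => lam x s * irr_coord g s - 'chi_(f x) g * w g s)) => //.
move=> y yR; under eq_bigr do rewrite mulrBr.
have E1 : \sum_(t <- cJ) lam y t * (lam x t * irr_coord g t)
    = 'chi_(f x) g * 'chi_(f y) g.
  by rewrite (irrM_expansion g xR yR); apply: eq_bigr => t _; ring.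
have E2 : \sum_(t <- cJ) lam y t * ('chi_(f x) g * w g t) = 'chi_(f x) g * 'chi_(f y) g.
  by rewrite (irr_expansion Gg yR) mulr_sumr; apply: eq_bigr => t _; ring.
by rewrite sumrB E1 E2 subrr.
Qed.

Lemma irr_col_scaled g : g \in G ->
  exists2 s, s \in cJ & forall x, x \in rI -> lam x s = 'chi_(f x) g * lam x1 s.
Proof.
move=> Gg; have /hasP[s sS ws] : has (fun s => w g s != 0) cJ.
  apply/hasPn => w0; have := irr_expansion Gg x1_in.
  rewrite f_x1 irr0 cfun1E Gg big1_seq => [/eqP|s /andP[_ sS]]; first by rewrite oner_eq0.
  by move/negPn: (w0 s sS) => /eqP ->; rewrite mulr0.
have u0 : irr_coord g s != 0 by apply: contraNneq ws => u0; rewrite /w u0 mulr0.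
by exists s => // x xR; apply: (mulIf u0); rewrite lam_irr_coord // /w mulrA.
Qed.

End TrivialCharacterRow.

Hypotheses (one_in : one \in rI) (lam_one : forall s, lam one s = 1).
Hypothesis nonpos_off_c0 :
  forall s, s \in cJ -> s != c0 -> exists2 x, x \in rI & ~~ (0 < lam x s).
Hypothesis lam_c0_gt1 : forall x, x \in rI -> x != one -> 1 < lam x c0.

Lemma pos_col_eq_c0 s : s \in cJ -> (forall x, x \in rI -> 0 < lam x s) -> s = c0.
Proof.
move=> sS pos; apply/eqP/negPn/negP => /(nonpos_off_c0 sS)[x xR].
by rewrite pos.
Qed.

Lemma f_one : f one = 0.
Proof.
have [x1 x1R f_x1] := f_surj 0.
have [s sS Hs] := irr_col_scaled x1R f_x1 (group1 G).
have one_s : 'chi_(f one) 1%g * lam x1 s = 1 by rewrite -Hs // lam_one.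
have x1_pos : 0 < lam x1 s by rewrite -(pmulr_rgt0 _ (irr1_gt0 (f one))) one_s ltr01.
have sc0 : s = c0 by apply: pos_col_eq_c0 => // x xR; rewrite Hs // mulr_gt0 ?irr1_gt0.
have [<- // | x1_one] := eqVneq x1 one.
have := ler_peMl (ltW x1_pos) (irr1_ge1 (f one)).
by rewrite one_s sc0 => /(lt_le_trans (lam_c0_gt1 x1R x1_one)); rewrite ltxx.
Qed.

Lemma irr_col g : g \in G ->
  exists2 s, s \in cJ & forall x, x \in rI -> 'chi_(f x) g = lam x s.
Proof.
move=> Gg; have [s sS Hs] := irr_col_scaled one_in f_one Gg.
by exists s => // x xR; rewrite Hs // lam_one mulr1.
Qed.

Lemma irr1_col_c0 x : x \in rI -> 'chi_(f x) 1%g = lam x c0.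
Proof.
have [s sS Hs] := irr_col (group1 G).
suff -> : c0 = s by apply: Hs.
by symmetry; apply: pos_col_eq_c0 => // y yR; rewrite -Hs ?irr1_gt0.
Qed.

Lemma card_G_col_c0 : #|G|%:R = \sum_(x <- rI) lam x c0 ^+ 2.
Proof.
rewrite -irr_sum_square sum_Iirr_rows big_seq [RHS]big_seq.
by apply: eq_bigr => x xR; rewrite irr1_col_c0.
Qed.

Lemma eq_irr_conjg a b : a \in G -> b \in G ->
  (forall x, x \in rI -> 'chi_(f x) a = 'chi_(f x) b) -> a \in (b ^: G)%g.
Proof.
move=> Ga Gb ab; apply: contraT => ab_nconj.
have := second_orthogonality_relation a Gb.
rewrite (negPf ab_nconj) mulr0n sum_Iirr_rows big_seq.
under eq_bigr => x xR do rewrite -(ab x xR).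
rewrite -big_seq -(sum_Iirr_rows (fun i => 'chi_i a * ('chi_i a)^*)).
rewrite second_orthogonality_relation // class_refl mulr1n.
by move/eqP; rewrite (negPf (neq0CG _)).
Qed.

Lemma order_col a b s : a \in G -> b \in G ->
    (forall x, x \in rI -> 'chi_(f x) a = lam x s) ->
    (forall x, x \in rI -> 'chi_(f x) b = lam x s) ->
  #[a]%g = #[b]%g.
Proof.
move=> Ga Gb Ha Hb.
have /imsetP[y _ ->] : a \in (b ^: G)%g by apply: eq_irr_conjg => // x xR; rewrite Ha ?Hb.
exact: orderJ.
Qed.

Lemma card_cent1_col a s : a \in G ->
  (forall x, x \in rI -> 'chi_(f x) a = lam x s) -> #|'C_G[a]%g|%:R = col_norm s.
Proof.
move=> Ga Ha; have := second_orthogonality_relation a Ga.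
rewrite class_refl mulr1n => <-.
rewrite sum_Iirr_rows /col_norm big_seq [RHS]big_seq.
by apply: eq_bigr => x xR; rewrite Ha // normCK.
Qed.

Variables (X : I) (q K : nat) (s1 s2 : J).
Hypotheses (X_in : X \in rI) (lam_X_c0 : lam X c0 = q%:R) (q_gt0 : (0 < q)%N).
Hypotheses (sum_sq_c0 : \sum_(x <- rI) lam x c0 ^+ 2 = (q * K)%:R)
  (coprime_qK : coprime q K).
Hypothesis X_off_c0 : forall s, s \in cJ -> s != c0 ->
  [\/ lam X s = 1, lam X s = -1 |
      [/\ lam X s = 0, s = s1 \/ s = s2 & col_norm s = q%:R]].

Lemma card_G_qK : #|G| = (q * K)%N.
Proof. by apply/eqP; rewrite -(eqr_nat algC) card_G_col_c0 sum_sq_c0. Qed.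

Lemma dvd_card_class a : a \in G ->
  'chi_(f X) a = 1 \/ 'chi_(f X) a = -1 -> (q %| #|(a ^: G)%g|)%N.
Proof.
move=> Ga Xa; have := Aint_class_div_irr1 (f X) Ga; rewrite irr1_col_c0 // lam_X_c0.
have -> : #|(a ^: G)%g|%:R * 'chi_(f X) a / q%:R
    = 'chi_(f X) a * (#|(a ^: G)%g|%:R / q%:R) by rewrite mulrCA mulrA.
case: Xa => ->; rewrite ?mul1r ?mulN1r ?rpredN => cl_q.
all: rewrite -dvdC_nat unfold_in pnatr_eq0 (gtn_eqF q_gt0) /=.
all: by rewrite Cint_rat_Aint // rpred_div // rpred_nat.
Qed.

Lemma irr_X_neq_sign a l : a \in G -> prime l -> (l %| q)%N -> (l %| #[a]%g)%N ->
  ~ ('chi_(f X) a = 1 \/ 'chi_(f X) a = -1).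
Proof.
move=> Ga pl lq la /(dvd_card_class Ga) q_cl.
have l_cent : (l %| #|'C_G[a]%g|)%N.
  by apply: dvdn_trans la (cardSg _); rewrite cycle_subG inE Ga cent1id.
have cent_K : (#|'C_G[a]%g| %| K)%N.
  have : (#|'C_G[a]%g| * #|(a ^: G)%g|)%N = (q * K)%N.
    by rewrite -index_cent1 Lagrange ?subsetIl ?card_G_qK.
  case/dvdnP: q_cl => m ->; rewrite mulnA [(q * K)%N]mulnC => /eqP.
  by rewrite eqn_mul2r (gtn_eqF q_gt0) /= => /eqP <-; apply: dvdn_mulr.
have := coprime_dvdl lq coprime_qK.
by rewrite prime_coprime // (dvdn_trans l_cent cent_K).
Qed.

Lemma col_of_prime_dvd_order a l : a \in G -> prime l -> (l %| q)%N -> (l %| #[a]%g)%N ->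
  exists s, [/\ s = s1 \/ s = s2, col_norm s = q%:R
              & forall x, x \in rI -> 'chi_(f x) a = lam x s].
Proof.
move=> Ga pl lq la; have [s sS Ha] := irr_col Ga.
have sc0 : s != c0.
  apply: contraTneq la => sc0; rewrite sc0 in Ha.
  rewrite (order_col Ga (group1 G) Ha) => [|x xR]; last by rewrite irr1_col_c0.
  by rewrite order1 dvdn1 neq_ltn prime_gt1 ?orbT.
have X_nsign := irr_X_neq_sign Ga pl lq la.
case: (X_off_c0 sS sc0) => [X1 | XN1 | [_ s12 ns]]; last by exists s.
  by case: X_nsign; left; rewrite Ha.
by case: X_nsign; right; rewrite Ha.
Qed.

Lemma not_two_prime_divisors p r : prime p -> prime r ->
  (p %| q)%N -> (r %| q)%N -> p != r -> False.
Proof.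
move=> pp pr pq rq pr_neq.
have [g Gg og] : {g | g \in G & #[g]%g = p}.
  by apply: Cauchy => //; rewrite card_G_qK dvdn_mulr.
have pg : (p %| #[g]%g)%N by rewrite og.
have [sg [sg12 sg_norm Hg]] := col_of_prime_dvd_order Gg pp pq pg.
have [h /setIP[Gh /cent1P cgh] oh] : {h | h \in 'C_G[g]%g & #[h]%g = r}.
  apply: Cauchy => //; suff -> : #|'C_G[g]%g| = q by [].
  by apply/eqP; rewrite -(eqr_nat algC) (card_cent1_col Gg Hg) sg_norm.
have rh : (r %| #[h]%g)%N by rewrite oh.
have [sh [sh12 _ Hh]] := col_of_prime_dvd_order Gh pr rq rh.
have ogh : #[g * h]%g = (p * r)%N by rewrite orderM ?og ?oh // prime_coprime // dvdn_prime2.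
have Ggh := groupM Gg Gh.
have pgh : (p %| #[g * h]%g)%N by rewrite ogh dvdn_mulr.
have [sgh [sgh12 _ Hgh]] := col_of_prime_dvd_order Ggh pp pq pgh.
have p_npr : p != (p * r)%N.
  by rewrite -{1}[p]muln1 eqn_pmul2l ?prime_gt0 // eq_sym neq_ltn (prime_gt1 pr) orbT.
have r_npr : r != (p * r)%N.
  by rewrite -{1}[r]mul1n eqn_pmul2r ?prime_gt0 // eq_sym neq_ltn (prime_gt1 pp) orbT.
have : sg = sh \/ sg = sgh \/ sh = sgh by case: sg12 sh12 sgh12 => -> [] -> [] ->; auto.
case=> [E|[E|E]]; [rewrite -E in Hh | rewrite -E in Hgh | rewrite -E in Hgh].
- by move: (order_col Gg Gh Hg Hh); rewrite og oh => /eqP; rewrite (negPf pr_neq).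
- by move: (order_col Gg Ggh Hg Hgh); rewrite og ogh => /eqP; rewrite (negPf p_npr).
- by move: (order_col Gh Ggh Hh Hgh); rewrite oh ogh => /eqP; rewrite (negPf r_npr).
Qed.

End EigentableRep.

Lemma lam_Triv q s : lam q Triv s = 1.
Proof. by rewrite /lam; case: ifP => _ //; case: ifP. Qed.

Lemma lam_Xq_C0 q : lam q Xq C0 = q%:R.
Proof. by rewrite /lam; case: ifP => _ //; case: ifP. Qed.

Definition rows_of (a b c : nat) : seq rowl :=
  [:: Triv] ++ map Xh (range1 a) ++ map Xm (range1 b) ++ [:: Xq] ++ map Xp (range1 c).

Lemma rows_of_uniq a b c : uniq (rows_of a b c).
Proof.
have notin_map (g : nat -> rowl) x r : (forall k, x <> g k) -> (x \in map g r) = false.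
  by move=> gx; apply/negP => /mapP[k _ /gx []].
rewrite /rows_of /= !cat_uniq /= !mem_cat !inE !notin_map // ?andbT.
have -> /= : (Triv == Xq) = false by case: eqP.
rewrite !map_inj_uniq ?iota_uniq ?andbT; try by move=> ? ? [].
apply/and3P; split => //.
  apply/hasPn => x; rewrite mem_cat in_cons.
  by case/orP=> [/mapP[k _ ->] | /orP[/eqP -> | /mapP[k _ ->]]]; apply/negbT/notin_map.
by apply/hasPn => x /mapP[k _ ->]; apply/negbT/notin_map.
Qed.

Lemma mem_rows_of a b c x : x \in rows_of a b c ->
  x = Triv \/ (exists2 k, x = Xh k & (0 < k <= a)%N) \/ (exists k, x = Xm k)
  \/ x = Xq \/ (exists k, x = Xp k).
Proof.
rewrite /rows_of !mem_cat !inE.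
case/orP=> [/eqP->|/orP[/mapP[k kr ->]|/orP[/mapP[k _ ->]|/orP[/eqP->|/mapP[k _ ->]]]]].
- by left.
- by right; left; exists k => //; move: kr; rewrite /range1 mem_iota; lia.
- by right; right; left; exists k.
- by right; right; right; left.
- by right; right; right; right; exists k.
Qed.

Lemma sumr_const_seq (V : nmodType) (T : Type) (r : seq T) (a : V) :
  \sum_(i <- r) a = a *+ size r.
Proof. by elim: r => [|x r IH]; rewrite ?big_nil ?big_cons ?IH ?mulrS. Qed.

Lemma sum_rows_of a b c (F : rowl -> algC) : \sum_(x <- rows_of a b c) F x =
  F Triv + \sum_(k <- range1 a) F (Xh k) + \sum_(k <- range1 b) F (Xm k) + F Xq
   + \sum_(k <- range1 c) F (Xp k).
Proof. by rewrite /rows_of !big_cat /= !big_map !big_cons !big_nil !addr0 !addrA. Qed.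

Lemma rows_ofE q : exists a b c, rows q = rows_of a b c.
Proof.
rewrite /rows; case: ifP => _; first by exists 0, (q %/ 2)%N, ((q - 2) %/ 2)%N.
case: ifP => _; first by exists 2, ((q - 3) %/ 4)%N, ((q - 3) %/ 4)%N.
by exists 2, ((q - 1) %/ 4)%N, ((q - 5) %/ 4)%N.
Qed.

Lemma uniq_rows q : uniq (rows q).
Proof. by have [a [b [c ->]]] := rows_ofE q; apply: rows_of_uniq. Qed.

Lemma Triv_in_rows q : Triv \in rows q.
Proof. by have [a [b [c ->]]] := rows_ofE q; rewrite !mem_cat !inE eqxx. Qed.

Lemma Xq_in_rows q : Xq \in rows q.
Proof. by have [a [b [c ->]]] := rows_ofE q; rewrite !mem_cat !inE eqxx !orbT. Qed.

Lemma sgnS j : sgn j.+1 = - sgn j.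
Proof. by rewrite /sgn exprS mulN1r. Qed.

Lemma sgn_sqr j : sgn j ^+ 2 = 1.
Proof. by rewrite /sgn -exprM mulnC exprM sqrrN !expr1n. Qed.

Lemma sgn_real j : sgn j \is Num.real.
Proof. by rewrite rpredX ?rpredN ?rpred1. Qed.

Lemma sqr_norm_Dentry_3mod4 j (x : algC) : 0 <= x ->
  `|(-1 + 'i * sgn j * sqrtC x) / 2%:R| ^+ 2 = (1 + x) / 4%:R.
Proof.
move=> x_ge0.
have -> : (-1 + 'i * sgn j * sqrtC x) / 2%:R = - 1 / 2%:R + 'i * (sgn j * sqrtC x / 2%:R).
  by ring.
rewrite normC2_rect ?rpredM ?rpredV ?rpredN ?rpred1 ?rpred_nat ?sgn_real ?sqrtC_real //.
by rewrite !exprMn sgn_sqr sqrtCK; field; rewrite ?pnatr_eq0.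
Qed.

Lemma sqr_norm_Dentries_1mod4 j (x : algC) : 0 <= x ->
  `|(1 + sgn j * sqrtC x) / 2%:R| ^+ 2 + `|(1 + - sgn j * sqrtC x) / 2%:R| ^+ 2
    = (1 + x) / 2%:R.
Proof.
move=> x_ge0; have x_real := sqrtC_real x_ge0; have e_real := sgn_real j.
have real_entry e : e \is Num.real -> (1 + e * sqrtC x) / 2%:R \is Num.real.
  by move=> ?; rewrite rpredM ?rpredV ?rpredD ?rpredM ?rpred1 ?rpred_nat.
rewrite !real_normK ?real_entry ?rpredN //.
have -> : ((1 + sgn j * sqrtC x) / 2%:R) ^+ 2 + ((1 + - sgn j * sqrtC x) / 2%:R) ^+ 2
   = (1 + sgn j ^+ 2 * sqrtC x ^+ 2) / 2%:R by field; rewrite ?pnatr_eq0.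
by rewrite sgn_sqr sqrtCK mul1r.
Qed.

Record Rq_spec (q : nat) : Prop := RqSpec {
  size_rows_cols : size (rows q) = size (cols q);
  nonpos_off_C0 : forall s, s \in cols q -> s != C0 ->
    exists2 x, x \in rows q & ~~ (0 < lam q x s);
  lam_C0_gt1 : forall x, x \in rows q -> x != Triv -> 1 < lam q x C0;
  sum_sq_C0 : exists2 K, \sum_(x <- rows q) lam q x C0 ^+ 2 = (q * K)%:R & coprime q K;
  Xq_off_C0 : exists s1 s2, forall s, s \in cols q -> s != C0 ->
    [\/ lam q Xq s = 1, lam q Xq s = -1 |
        [/\ lam q Xq s = 0, s = s1 \/ s = s2 & cnorm q s = q%:R]]
}.

Section EvenCase.

Variables (q n : nat).
Hypothesis hq : q = (2 * (n + 3))%N.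

Let q_even : odd q = false. Proof. by rewrite hq oddM. Qed.

Let half_q : (q %/ 2 = n + 3)%N. Proof. by rewrite hq mulKn. Qed.
Let half_q2 : ((q - 2) %/ 2 = n + 2)%N.
Proof. by rewrite (_ : (q - 2 = 2 * (n + 2))%N) ?mulKn //; lia. Qed.

Lemma rows_even : rows q = rows_of 0 (n + 3) (n + 2).
Proof. by rewrite /rows q_even /= half_q half_q2. Qed.

Lemma cols_even :
  cols q = [:: C0; C1] ++ map Acol (range1 (n + 2)) ++ map Bcol (range1 (n + 3)).
Proof. by rewrite /cols q_even /= half_q half_q2. Qed.

Lemma mem_cols_even s : s \in cols q ->
  s = C0 \/ s = C1 \/ (exists k, s = Acol k) \/ (exists k, s = Bcol k).
Proof.
rewrite cols_even !mem_cat !inE.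
case/orP=> [/orP[/eqP->|/eqP->]|/orP[/mapP[k _ ->]|/mapP[k _ ->]]].
- by left.
- by right; left.
- by right; right; left; exists k.
- by right; right; right; exists k.
Qed.

Lemma Xm1_in_rows_even : Xm 1 \in rows q.
Proof. by rewrite rows_even !mem_cat map_f ?orbT // /range1 mem_iota; lia. Qed.

Lemma sum_sq_C0_even :
  \sum_(x <- rows q) lam q x C0 ^+ 2 = (q * ((2 * n + 5) * (2 * n + 7)))%:R.
Proof.
rewrite rows_even sum_rows_of /range1 /= big_nil /lam q_even /= !sumr_const_seq !size_iota.
rewrite -!natrX -!mulrnA expr1n addr0 -[1]/(1%:R) -!natrD; congr (_ %:R).
by rewrite hq (_ : (2 * (n + 3) - 1 = 2 * n + 5)%N); nia.
Qed.

Lemma coprime_even : coprime q ((2 * n + 5) * (2 * n + 7)).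
Proof.
rewrite coprimeMr; apply/andP; split.
  by rewrite (_ : q = (2 * n + 5).+1)%N ?coprimeSn //; lia.
by rewrite (_ : (2 * n + 7 = q.+1)%N) ?coprimenS //; lia.
Qed.

Lemma Rq_spec_even : Rq_spec q.
Proof.
split.
- by rewrite rows_even cols_even /rows_of !size_cat !size_map /range1 !size_iota /=; lia.
- move=> s /mem_cols_even [->|[->|[[k ->]|[k ->]]]]; rewrite ?eqxx // => _.
  + by exists Xq; rewrite ?Xq_in_rows // /lam q_even /= ltxx.
  + by exists (Xm 1); rewrite ?Xm1_in_rows_even // /lam q_even /= ltxx.
  + by exists Xq; rewrite ?Xq_in_rows // /lam q_even /= ltr0N1.
- move=> x; rewrite rows_even => /mem_rows_of.
  case=> [->|[[k -> /andP[k1 k0]]|[[k ->]|[->|[k ->]]]]]; rewrite ?eqxx // => _.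
  + by move: k1 k0; lia.
  + by rewrite /lam q_even /= ltr1n hq; lia.
  + by rewrite /lam q_even /= ltr1n hq; lia.
  + by rewrite /lam q_even /= ltr1n hq; lia.
- by exists ((2 * n + 5) * (2 * n + 7))%N; [apply: sum_sq_C0_even | apply: coprime_even].
- exists C1, C1 => s /mem_cols_even [->|[->|[[k ->]|[k ->]]]]; rewrite ?eqxx // => _.
  + apply: Or33; split; rewrite /lam ?q_even //=; [by left|].
    rewrite /cnorm rows_even sum_rows_of /range1 /= big_nil /lam q_even /= !sumr_const_seq.
    rewrite !size_iota normrN1 normr0 normr1 !expr1n expr0n /= !addr0 -[1]/(1%:R) -!natrD.
    by rewrite hq; congr (_ %:R); lia.
  + by apply: Or31; rewrite /lam q_even.
  + by apply: Or32; rewrite /lam q_even.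
Qed.

End EvenCase.

Section ThreeMod4.

Variables (q m : nat).
Hypotheses (hq : q = (4 * m + 3)%N) (m_gt0 : (0 < m)%N).

Let q_odd : odd q. Proof. by rewrite hq oddD oddM. Qed.
Let q_mod4 : (q %% 4 == 3)%N. Proof. by rewrite hq mulnC modnMDl. Qed.
Let quarter_q : ((q - 3) %/ 4 = m)%N. Proof. by rewrite hq addnK mulKn. Qed.

Lemma rows_3mod4 : rows q = rows_of 2 m m.
Proof. by rewrite /rows q_odd q_mod4 /= quarter_q. Qed.

Lemma cols_3mod4 : cols q =
  [:: C0] ++ map Dcol (range1 2) ++ map Acol (range1 m) ++ map Bcol (range1 m) ++ [:: Ecol].
Proof. by rewrite /cols q_odd q_mod4 /= quarter_q. Qed.

Lemma mem_cols_3mod4 s : s \in cols q ->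
  s = C0 \/ s = Dcol 1 \/ s = Dcol 2 \/ (exists k, s = Acol k) \/ (exists k, s = Bcol k)
  \/ s = Ecol.
Proof.
rewrite cols_3mod4 !mem_cat !inE.
case/orP=> [/eqP->|/orP[/orP[/eqP->|/eqP->]|/orP[/mapP[k _ ->]|/orP[/mapP[k _ ->]|/eqP->]]]].
- by left.
- by right; left.
- by right; right; left.
- by right; right; right; left; exists k.
- by right; right; right; right; left; exists k.
- by right; right; right; right; right.
Qed.

Lemma cnorm_Dcol_3mod4 k : cnorm q (Dcol k) = q%:R.
Proof.
rewrite /cnorm rows_3mod4 sum_rows_of /lam q_odd q_mod4 /= !sumr_const_seq /range1.
rewrite !size_iota /= !big_cons big_nil addr0 !sqr_norm_Dentry_3mod4 ?ler0n //.
rewrite normrN1 normr0 normr1 !expr1n expr0n /= addr0 hq natrD natrM.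
by field; rewrite ?pnatr_eq0.
Qed.

Lemma sum_sq_C0_3mod4 :
  \sum_(x <- rows q) lam q x C0 ^+ 2 = (q * ((2 * m + 1) * (4 * m + 4)))%:R.
Proof.
rewrite rows_3mod4 sum_rows_of /lam q_odd q_mod4 /= !sumr_const_seq /range1 !size_iota.
rewrite -!natrX -!mulrnA expr1n -[1]/(1%:R) -!natrD; congr (_ %:R).
rewrite hq (_ : (4 * m + 3 - 1 = 2 * (2 * m + 1))%N); last by lia.
by rewrite mulKn //; nia.
Qed.

Lemma coprime_3mod4 : coprime q ((2 * m + 1) * (4 * m + 4)).
Proof.
rewrite coprimeMr; apply/andP; split.
  by rewrite coprime_sym /coprime (_ : q = 2 * (2 * m + 1) + 1)%N ?gcdnMDl ?gcdn1 //; lia.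
by rewrite (_ : (4 * m + 4 = q.+1)%N) ?coprimenS //; lia.
Qed.

Lemma Rq_spec_3mod4 : Rq_spec q.
Proof.
have Xh1_in : Xh 1 \in rows q by rewrite rows_3mod4 !mem_cat map_f ?orbT.
split.
- by rewrite rows_3mod4 cols_3mod4 /rows_of !size_cat !size_map /range1 !size_iota /=; lia.
- move=> s /mem_cols_3mod4 [->|[->|[->|[[k ->]|[[k ->]|->]]]]]; rewrite ?eqxx // => _.
  + by exists Xq; rewrite ?Xq_in_rows // /lam q_odd q_mod4 /= ltxx.
  + by exists Xq; rewrite ?Xq_in_rows // /lam q_odd q_mod4 /= ltxx.
  + by exists (Xh 1); rewrite // /lam q_odd q_mod4 /= ltxx.
  + by exists Xq; rewrite ?Xq_in_rows // /lam q_odd q_mod4 /= ltr0N1.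
  + by exists Xq; rewrite ?Xq_in_rows // /lam q_odd q_mod4 /= ltr0N1.
- move=> x; rewrite rows_3mod4 => /mem_rows_of.
  case=> [->|[[k -> _]|[[k ->]|[->|[k ->]]]]]; rewrite ?eqxx // => _.
  + rewrite /lam q_odd q_mod4 /= ltr1n hq.
    by rewrite (_ : (4 * m + 3 - 1) = 2 * (2 * m + 1))%N ?mulKn; lia.
  + by rewrite /lam q_odd q_mod4 /= ltr1n hq; lia.
  + by rewrite /lam q_odd q_mod4 /= ltr1n hq; lia.
  + by rewrite /lam q_odd q_mod4 /= ltr1n hq; lia.
- by exists ((2 * m + 1) * (4 * m + 4))%N; [apply: sum_sq_C0_3mod4 | apply: coprime_3mod4].
- exists (Dcol 1), (Dcol 2).
  move=> s /mem_cols_3mod4 [->|[->|[->|[[k ->]|[[k ->]|->]]]]]; rewrite ?eqxx // => _.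
  + by apply: Or33; split; rewrite ?cnorm_Dcol_3mod4 /lam ?q_odd ?q_mod4 //=; left.
  + by apply: Or33; split; rewrite ?cnorm_Dcol_3mod4 /lam ?q_odd ?q_mod4 //=; right.
  + by apply: Or31; rewrite /lam q_odd q_mod4.
  + by apply: Or32; rewrite /lam q_odd q_mod4.
  + by apply: Or32; rewrite /lam q_odd q_mod4.
Qed.

End ThreeMod4.

Section OneMod4.

Variables (q n : nat).
Hypothesis hq : q = (4 * n + 5)%N.

Let q_odd : odd q. Proof. by rewrite hq oddD oddM. Qed.
Let q_mod4 : (q %% 4 == 3)%N = false.
Proof. by rewrite hq (_ : (4 * n + 5 = (n + 1) * 4 + 1)%N) ?modnMDl //; lia. Qed.
Let quarter_q1 : ((q - 1) %/ 4 = n + 1)%N.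
Proof. by rewrite (_ : (q - 1 = 4 * (n + 1))%N) ?mulKn //; lia. Qed.
Let quarter_q5 : ((q - 5) %/ 4 = n)%N. Proof. by rewrite hq addnK mulKn. Qed.

Lemma rows_1mod4 : rows q = rows_of 2 (n + 1) n.
Proof. by rewrite /rows q_odd q_mod4 /= quarter_q1 quarter_q5. Qed.

Lemma cols_1mod4 : cols q =
  [:: C0] ++ map Dcol (range1 2) ++ map Acol (range1 n) ++ [:: Ecol]
    ++ map Bcol (range1 (n + 1)).
Proof. by rewrite /cols q_odd q_mod4 /= quarter_q1 quarter_q5. Qed.

Lemma mem_cols_1mod4 s : s \in cols q ->
  s = C0 \/ s = Dcol 1 \/ s = Dcol 2 \/ (exists k, s = Acol k) \/ (exists k, s = Bcol k)
  \/ s = Ecol.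
Proof.
rewrite cols_1mod4 !mem_cat !inE.
case/orP=> [/eqP->|/orP[/orP[/eqP->|/eqP->]|/orP[/mapP[k _ ->]|/orP[/eqP->|/mapP[k _ ->]]]]].
- by left.
- by right; left.
- by right; right; left.
- by right; right; right; left; exists k.
- by right; right; right; right; right.
- by right; right; right; right; left; exists k.
Qed.

Lemma cnorm_Dcol_1mod4 k : cnorm q (Dcol k) = q%:R.
Proof.
rewrite /cnorm rows_1mod4 sum_rows_of /lam q_odd q_mod4 /= !sumr_const_seq /range1.
rewrite !size_iota /= !big_cons big_nil addr0 (_ : (k + 2 = (k + 1).+1)%N); last by lia.
rewrite sgnS sqr_norm_Dentries_1mod4 ?ler0n //.
rewrite normrN1 normr0 normr1 !expr1n expr0n /= addr0 hq natrD natrM.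
by field; rewrite ?pnatr_eq0.
Qed.

Lemma sum_sq_C0_1mod4 :
  \sum_(x <- rows q) lam q x C0 ^+ 2 = (q * ((4 * n + 4) * (2 * n + 3)))%:R.
Proof.
rewrite rows_1mod4 sum_rows_of /lam q_odd q_mod4 /= !sumr_const_seq /range1 !size_iota.
rewrite -!natrX -!mulrnA expr1n -[1]/(1%:R) -!natrD; congr (_ %:R).
rewrite hq (_ : (4 * n + 5 + 1 = 2 * (2 * n + 3))%N); last by lia.
rewrite (_ : (4 * n + 5 - 1 = 4 * n + 4)%N); last by lia.
by rewrite mulKn //; nia.
Qed.

Lemma coprime_1mod4 : coprime q ((4 * n + 4) * (2 * n + 3)).
Proof.
rewrite coprimeMr; apply/andP; split.
  by rewrite (_ : q = (4 * n + 4).+1)%N ?coprimeSn //; lia.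
apply: (coprime_dvdr (dvdn_mull 2 (dvdnn (2 * n + 3)))).
by rewrite (_ : (2 * (2 * n + 3) = q.+1)%N) ?coprimenS //; lia.
Qed.

Lemma Rq_spec_1mod4 : Rq_spec q.
Proof.
have Xm1_in : Xm 1 \in rows q.
  by rewrite rows_1mod4 !mem_cat map_f ?orbT // /range1 mem_iota; lia.
split.
- by rewrite rows_1mod4 cols_1mod4 /rows_of !size_cat !size_map /range1 !size_iota /=; lia.
- move=> s /mem_cols_1mod4 [->|[->|[->|[[k ->]|[[k ->]|->]]]]]; rewrite ?eqxx // => _.
  + by exists Xq; rewrite ?Xq_in_rows // /lam q_odd q_mod4 /= ltxx.
  + by exists Xq; rewrite ?Xq_in_rows // /lam q_odd q_mod4 /= ltxx.
  + by exists (Xm 1); rewrite // /lam q_odd q_mod4 /= ltxx.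
  + by exists Xq; rewrite ?Xq_in_rows // /lam q_odd q_mod4 /= ltr0N1.
  + by exists (Xm 1); rewrite // /lam q_odd q_mod4 /= ltxx.
- move=> x; rewrite rows_1mod4 => /mem_rows_of.
  case=> [->|[[k -> _]|[[k ->]|[->|[k ->]]]]]; rewrite ?eqxx // => _.
  + rewrite /lam q_odd q_mod4 /= ltr1n hq.
    by rewrite (_ : (4 * n + 5 + 1) = 2 * (2 * n + 3))%N ?mulKn; lia.
  + by rewrite /lam q_odd q_mod4 /= ltr1n hq; lia.
  + by rewrite /lam q_odd q_mod4 /= ltr1n hq; lia.
  + by rewrite /lam q_odd q_mod4 /= ltr1n hq; lia.
- by exists ((4 * n + 4) * (2 * n + 3))%N; [apply: sum_sq_C0_1mod4 | apply: coprime_1mod4].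
- exists (Dcol 1), (Dcol 2).
  move=> s /mem_cols_1mod4 [->|[->|[->|[[k ->]|[[k ->]|->]]]]]; rewrite ?eqxx // => _.
  + by apply: Or33; split; rewrite ?cnorm_Dcol_1mod4 /lam ?q_odd ?q_mod4 //=; left.
  + by apply: Or33; split; rewrite ?cnorm_Dcol_1mod4 /lam ?q_odd ?q_mod4 //=; right.
  + by apply: Or31; rewrite /lam q_odd q_mod4.
  + by apply: Or32; rewrite /lam q_odd q_mod4.
  + by apply: Or31; rewrite /lam q_odd q_mod4.
Qed.

End OneMod4.

Lemma Rq_spec_ge6 q : (6 <= q)%N -> Rq_spec q.
Proof.
move=> q_ge6; move: (divn_eq q 4) (ltn_pmod q (isT : 0 < 4)%N).
case: (q %% 4)%N => [|[|[|[|r]]]] // q_eq _.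
- by apply: (Rq_spec_even (n := (2 * (q %/ 4) - 3)%N)); lia.
- by apply: (Rq_spec_1mod4 (n := (q %/ 4 - 1)%N)); lia.
- by apply: (Rq_spec_even (n := (2 * (q %/ 4) - 2)%N)); lia.
- by apply: (Rq_spec_3mod4 (m := (q %/ 4)%N)); lia.
Qed.

Lemma two_prime_divisors q : (2 <= q)%N -> ~ (exists p k : nat, prime p /\ q = (p ^ k)%N) ->
  exists p r, [/\ prime p, prime r, (p %| q)%N, (r %| q)%N & p != r].
Proof.
move=> q_ge2 not_pk; have p_pr := pdiv_prime q_ge2.
case/boolP: (has (predC1 (pdiv q)) (primes q)) => [/hasP[r] | /hasPn only_p].
  rewrite mem_primes => /and3P[r_pr _ rq] /= r_neq.
  by exists (pdiv q), r; rewrite eq_sym pdiv_dvd.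
case: not_pk; exists (pdiv q).
have /p_natP[k q_pk] : (pdiv q).-nat q.
  apply/pnatP => [|l l_pr lq]; first exact: ltnW.
  have := only_p l; rewrite mem_primes l_pr lq ltnW //= => /(_ isT) /negPn /eqP ->.
  by rewrite inE.
by exists k.
Qed.

Lemma not_prime_power_ge6 q : (2 <= q)%N -> ~ (exists p k : nat, prime p /\ q = (p ^ k)%N) ->
  (6 <= q)%N.
Proof.
move=> q_ge2 not_pk; rewrite leqNgt; apply/negP => q_lt6; apply: not_pk.
by case: q q_ge2 q_lt6 => [|[|[|[|[|[|q]]]]]] // _ _;
  [exists 2, 1 | exists 3, 1 | exists 2, 2 | exists 5, 1].
Qed.

Theorem lemma4p2 (q : nat) :
  (2 <= q)%N -> ~ (exists p k : nat, prime p /\ q = (p ^ k)%N) ->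
  forall (gT : finGroupType) (G : {group gT}), ~ fusion_iso_Rep q G.
Proof.
move=> q_ge2 not_pk gT G [f [f_inj f_surj f_fusion]].
have [p [r [p_pr r_pr pq rq p_neq_r]]] := two_prime_divisors q_ge2 not_pk.
have [size_rc nonpos gt1 [K sumK coprimeK] [s1 [s2 X_off]]] :=
  Rq_spec_ge6 (not_prime_power_ge6 q_ge2 not_pk).
have q_gt0 : (0 < q)%N by apply: ltnW.
exact: (not_two_prime_divisors (uniq_rows q) size_rc f_inj f_surj f_fusion
  (Triv_in_rows q) (lam_Triv q) nonpos gt1 (Xq_in_rows q) (lam_Xq_C0 q) q_gt0
  sumK coprimeK X_off p_pr r_pr pq rq p_neq_r).
Qed.
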